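(* Assume the setting in the context (in particular the Causal Faithfulness Condition). Let $x_i,x_j,x_k\in X$ be distinct. If $x_k$ is an ancestor of $x_i$ in $G$ and $x_k\perp\!\!\!\perp x_j\mid x_i$, then (1) there is no backdoor path between $x_i$ and $x_j$ in $G$, and (2) $x_j$ is not an ancestor of $x_i$.
   Context: Model: $X$ is a finite set of observed random variables and $U$ a finite set of unobserved random variables; $V=X\cup U$ and $G=(V,E)$ is a DAG on $V$. Each $v_i\in V$ satisfies $v_i=\sum_{x_j\in \mathrm{pa}(v_i)\cap X} f^{(i)}_j(x_j)+\sum_{u_k\in\mathrm{pa}(v_i)\cap U} f^{(i)}_k(u_k)+n_i$, where the $f$'s are nonlinear functions and the external noises $n_i$ are jointly independent. ''Parent'', ''ancestor'', ''path'', ''d-separation'' refer to $G$ (a path has distinct vertices). Causal Faithfulness Condition (CFC): any conditional independence among variables of $V$ that is not entailed by d-separation in $G$ does not hold. $\perp\!\!\!\perp$ denotes statistical independence. A backdoor path between $x_i$ and $x_j$ is a path in $G$ of the form $x_i\leftarrow\cdots\leftarrow v\to\cdots\to x_j$ for some vertex $v\in V$ (the vertices on it may be observed or unobserved). *)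

From HB Require Import structures.
From mathcomp Require Import all_boot all_order all_algebra.
From mathcomp Require Import all_classical all_reals all_analysis.

Set Implicit Arguments.
Unset Strict Implicit.
Unset Printing Implicit Defensive.

Import Order.TTheory GRing.Theory Num.Theory.
Local Open Scope classical_set_scope.
Local Open Scope ring_scope.

(* E x y means the directed edge x -> y.                                   *)

Section Graph.
Variables (V : finType) (E : rel V).

Definition acyclic_graph : Prop := forall x y, E x y -> ~~ connect E y x.

Definition ancestor (a b : V) : Prop := a != b /\ connect E a b.

Definition adj (x y : V) : bool := E x y || E y x.

Definition is_gpath (a b : V) (q : seq V) : Prop :=
  [/\ path adj a q, last a q = b & uniq (a :: q)].

(* Interior vertex number t (0 < t < size q) of the path a :: q is blocked
   by the conditioning set S. *)
Definition blocked_at (a : V) (q : seq V) (S : {set V}) (t : nat) : Prop :=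
  let s := a :: q in
  let w := nth a s t in
  let collider := E (nth a s t.-1) w && E (nth a s t.+1) w in
  (collider /\ ~~ [exists z in S, connect E w z]) \/ (~~ collider /\ w \in S).

Definition dsep (a b : V) (S : {set V}) : Prop :=
  forall q, is_gpath a b q ->
    exists2 t, (0 < t < size q)%N & blocked_at a q S t.

Definition dsep_set (A B S : {set V}) : Prop :=
  forall a b, a \in A -> b \in B -> dsep a b S.

Definition backdoor_path (a b : V) (q : seq V) : Prop :=
  let s := a :: q in
  is_gpath a b q /\
  exists2 t, (0 < t < size q)%N &
    (forall u, (u < t)%N -> E (nth a s u.+1) (nth a s u)) /\
    (forall u, (t <= u < size q)%N -> E (nth a s u) (nth a s u.+1)).

End Graph.

Section Prob.
Context {R : realType} {d : measure_display} {T : measurableType d}.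
Variable (P : probability T R).
Context {V : finType}.
Variable (v : V -> T -> R).

Definition sig_of (S : {set V}) : set (set T) :=
  <<s [set A | exists s (Y : set R), [/\ s \in S, measurable Y &
                                          A = v s @^-1` Y]] >>.

(* Conditional independence  A _||_ B | S  : for every event F of sigma(B),
   the conditional probability P(F | sigma(A u S)) admits a
   sigma(S)-measurable version (equivalently P(F | A,S) = P(F | S) a.s.). *)
Definition cond_indep (A B S : {set V}) : Prop :=
  forall F : set T, sig_of B F ->
    exists g : T -> R,
      [/\ (forall Y : set R, measurable Y -> sig_of S (g @^-1` Y)),
          P.-integrable setT (EFin \o g) &
          forall H : set T, sig_of (A :|: S) H ->
            P (F `&` H) = (\int[P]_(x in H) (g x)%:E)%E].

Definition mutually_indep (n : V -> T -> R) : Prop :=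
  forall B : V -> set R, (forall i, measurable (B i)) ->
    P (\bigcap_(i in [set: V]) (n i @^-1` B i)) =
    (\prod_(i : V) P (n i @^-1` B i))%E.

End Prob.

Definition nonlinear {R : realType} (f : R -> R) : Prop :=
  ~ exists a : R, forall x, f x = a * x.

From HB Require Import structures.
From mathcomp Require Import all_boot all_order all_algebra.
From mathcomp Require Import all_classical all_reals all_analysis.
Import Order.TTheory GRing.Theory Num.Theory.

(** Faithfulness turns [xk _||_ xj | xi] into the d-separation of [xk] and
    [xj] by [{xi}], so it suffices to exhibit a path from [xk] to [xj] that is
    open given [xi].  Both a backdoor path [xi <- ... <- v -> ... -> xj] and a
    directed path [xj -> ... -> xi] are collider-free paths from [xi] to [xj]
    whose first edge points into [xi]; prefixing a parent of [xi] makes [xi] a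
    collider that is its own descendant, hence an open path from that parent.
    Walking back along the directed path [xk -> ... -> xi], each new vertex
    is an ancestor of [xi] and thus never blocks, and shortcutting at repeated
    vertices keeps the path simple and open. *)

Set Implicit Arguments.
Unset Strict Implicit.

Section TriplePath.
Variables (T : Type) (r : T -> T -> T -> bool).

Fixpoint path3 (s : seq T) : bool :=
  if s is a :: ((b :: c :: _) as s') then r a b c && path3 s' else true.

Lemma path3_behead s : path3 s -> path3 (behead s).
Proof. by case: s => [|a [|b [|c s]]] //= /andP[]. Qed.

Lemma path3_catr s1 s2 : path3 (s1 ++ s2) -> path3 s2.
Proof. by elim: s1 => [|a s1 IH] // /path3_behead. Qed.

Lemma path3_nth x0 s : path3 s <->
  (forall t, (0 < t < (size s).-1)%N ->
     r (nth x0 s t.-1) (nth x0 s t) (nth x0 s t.+1)).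
Proof.
elim: s => [|a [|b [|c s]] IH]; try by split=> // _ [|[|t]].
split=> [/andP[habc hs] [|[|t]] //= ts | h /=]; first exact: (IH.1 hs t.+1).
rewrite (h 1%N) //=; apply/IH => -[|t] //= ts; exact: (h t.+2).
Qed.

End TriplePath.

Lemma path_suffix (T : Type) (e : rel T) a q l y q' :
  a :: q = l ++ y :: q' -> path e a q -> path e y q'.
Proof.
case: l => [|b l] /= [-> ->] //.
by rewrite cat_path => /andP[_] /= /andP[_ ->].
Qed.

Section SimplePaths.
Variables (V : finType) (E : rel V).

Definition collider_at (a : V) (q : seq V) (t : nat) : bool :=
  E (nth a (a :: q) t.-1) (nth a (a :: q) t) &&
  E (nth a (a :: q) t.+1) (nth a (a :: q) t).

Definition collider_free_into (a : V) (q : seq V) : Prop :=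
  (forall t, (0 < t < size q)%N -> ~~ collider_at a q t) /\
  (0 < size q -> E (nth a q 0) a)%N.

Lemma gpath_suffix a b q l y q' :
  a :: q = l ++ y :: q' -> is_gpath E a b q -> is_gpath E y b q'.
Proof.
move=> eq_q [hpath hlast huniq]; split.
- exact: path_suffix eq_q hpath.
- by move: eq_q hlast; case: l => [|c l] /= [-> ->] //; rewrite last_cat.
- by move: huniq; rewrite eq_q cat_uniq => /and3P[].
Qed.

(* Extending a simple path by an adjacent vertex [y] may create a cycle;
   cutting it at the first occurrence of [y] leaves a suffix of
   [y :: z :: q]. *)
Lemma gpath_shortcut b y z q : adj E y z -> is_gpath E z b q ->
  exists2 q', is_gpath E y b q' & exists l, [:: y, z & q] = l ++ y :: q'.
Proof.
move=> hyz hq; have [hpath hlast huniq] := hq.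
case: (boolP (y \in z :: q)) => [y_in | y_notin].
  have [l [q' eq_q]] : exists l q', z :: q = l ++ y :: q'.
    by case/splitPr: y_in => l q'; exists l, q'.
  by exists q'; [exact: gpath_suffix eq_q hq | exists (y :: l); rewrite eq_q].
exists (z :: q); last by exists [::].
by split; rewrite /= ?hyz ?hpath ?y_notin.
Qed.

Lemma connect_rev_gpath a c : connect E a c ->
  exists2 q, is_gpath E c a q & path (fun x y => E y x) c q.
Proof.
case/connectP => p /shortenP[p' hp' huniq _] ->.
have rev_p' : rev (a :: p') = last a p' :: rev (belast a p').
  by rewrite lastI rev_rcons.
exists (rev (belast a p')); last by rewrite rev_path.
split; last by rewrite -rev_p' rev_uniq.
- apply: sub_path (_ : path (fun x y => E y x) _ _); last by rewrite rev_path.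
  by move=> x y; rewrite /adj orbC => ->.
- have -> : last (last a p') (rev (belast a p')) = last a (rev (a :: p')).
    by rewrite rev_p'.
  by rewrite rev_cons last_rcons.
Qed.

Lemma acyclic_edge_asym (acyclic : acyclic_graph E) x y : E x y -> ~~ E y x.
Proof. by move=> /acyclic; apply: contraNN; apply: connect1. Qed.

Lemma backdoor_path_collider_free (acyclic : acyclic_graph E) a b q :
  backdoor_path E a b q -> collider_free_into a q.
Proof.
case=> _ [s /andP[s_gt0 s_lt] [up down]]; split => [t /andP[t_gt0 t_lt]|_].
  apply/andP => -[hin1 hin2].
  have [t_le_s | s_lt_t] := leqP t s.
    move: (acyclic_edge_asym acyclic hin1); apply/negP.
    by rewrite -{1}(prednK t_gt0) up // (leq_trans _ t_le_s) ?ltn_predL.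
  move: (acyclic_edge_asym acyclic hin2); apply/negP.
  by rewrite down // (ltnW s_lt_t).
exact: up 0%N s_gt0.
Qed.

Lemma rev_directed_path_collider_free (acyclic : acyclic_graph E) a q :
  path (fun x y => E y x) a q -> collider_free_into a q.
Proof.
move=> hrev; split => [[|t] // /andP[_ t_lt] | q_gt0].
  apply/nandP; left; apply/acyclic_edge_asym => //.
  exact: (pathP a hrev t (ltnW t_lt)).
exact: (pathP a hrev 0).
Qed.

End SimplePaths.

Section OpenPaths.
Variables (V : finType) (E : rel V) (c b : V).
Hypothesis acyclic : acyclic_graph E.

(* The negation of [blocked_at] for the conditioning set [[set c]]. *)
Definition unblocked (x y z : V) : bool :=
  if E x y && E z y then connect E y c else y != c.

Definition open_path_from (y : V) : Prop :=
  exists2 q, is_gpath E y b q &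
    forall p, E p y -> path3 unblocked [:: p, y & q].

Lemma open_path_from_child y z : E y z -> open_path_from z ->
  exists2 q, is_gpath E y b q & path3 unblocked (y :: q).
Proof.
move=> hyz [q hq hopen].
have hadj : adj E y z by rewrite /adj hyz.
have [q' hq' [l eq_q]] := gpath_shortcut hadj hq.
by exists q' => //; apply: (@path3_catr _ _ l); rewrite -eq_q; apply: hopen.
Qed.

Lemma open_path_from_parent y z : E y z -> connect E z c ->
  open_path_from z -> open_path_from y.
Proof.
move=> hyz hzc /(open_path_from_child hyz)[q hq hopen].
have hyc : connect E y c := connect_trans (connect1 hyz) hzc.
have y_neq_c : y != c by apply: contraTneq hzc => <-; apply: acyclic.
exists q => // p _; case: q hq hopen => [|x q] //= _ ->.
by rewrite /unblocked y_neq_c hyc if_same.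
Qed.

Lemma open_path_from_ancestor y : connect E y c ->
  open_path_from c -> open_path_from y.
Proof.
move=> /connectP[p hp hlast] hopen.
elim: p y hp hlast => [|z p IH] y /=; first by move=> _ <-.
move=> /andP[hyz hp] hlast; apply: (open_path_from_parent hyz) (IH _ hp hlast).
by apply/connectP; exists p.
Qed.

Lemma collider_free_open_path q :
  is_gpath E c b q -> collider_free_into E c q -> open_path_from c.
Proof.
move=> hq [no_collider into_c]; exists q => // p hpc.
apply/(path3_nth _ c) => -[|[|t]] // /andP[_ t_lt] /=.
  by rewrite /unblocked hpc into_c ?connect0.
have /negbTE := no_collider t.+1 t_lt; rewrite /collider_at /unblocked => -> /=.
have [_ _ /andP[c_notin_q _]] := hq.
by apply: contraNneq c_notin_q => <-; rewrite mem_nth // ltnW.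
Qed.

Lemma ancestor_not_dsep a :
  ancestor E a c -> open_path_from c -> ~ dsep E a b [set c].
Proof.
case=> a_neq_c /connectP[[|z p] /= hp hlast].
  by rewrite hlast eqxx in a_neq_c.
move=> hopen hsep; case/andP: hp => haz hp.
have hz : open_path_from z.
  by apply: open_path_from_ancestor hopen; apply/connectP; exists p.
have [q hq /(path3_nth _ a)] := open_path_from_child haz hz.
have [t t_lt] := hsep q hq => + /(_ t t_lt).
rewrite /blocked_at /unblocked /=; case: ifP => _ /=.
  case=> [[_ /negP no_descendant_in_c] | []//] hc; apply: no_descendant_in_c.
  by apply/existsP; exists c; rewrite inE eqxx.
by case=> [[]//|[_]]; rewrite inE => ->.
Qed.

End OpenPaths.

Lemma set1I_eq0 (V : finType) (x y : V) :
  x != y -> [set x] :&: [set y] = finset.set0.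
Proof. by move=> x_neq_y; apply/eqP; rewrite setI_eq0 disjoints1 inE. Qed.

Local Open Scope classical_set_scope.
Local Open Scope ring_scope.

Theorem lemma8
  (R : realType) (d : measure_display) (T : measurableType d)
  (P : probability T R)
  (V : finType) (X : {set V}) (E : rel V)
  (v : V -> T -> R) (n : V -> T -> R) (f : V -> V -> R -> R)
  (hdag : acyclic_graph E)
  (hf_meas : forall i j, measurable_fun setT (f i j))
  (hf_nonlin : forall i j, E j i -> nonlinear (f i j))
  (hn_meas : forall i, measurable_fun setT (n i))
  (hv_meas : forall i, measurable_fun setT (v i))
  (hsem : forall i w, v i w = \sum_(j : V | E j i) f i j (v j w) + n i w)
  (hn_indep : mutually_indep P n)
  (hCFC : forall A B S : {set V},
      A :&: B = finset.set0 -> A :&: S = finset.set0 -> B :&: S = finset.set0 ->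
      cond_indep P v A B S -> dsep_set E A B S)
  (xi xj xk : V) (hi : xi \in X) (hj : xj \in X) (hk : xk \in X)
  (hij : xi != xj) (hik : xi != xk) (hjk : xj != xk)
  (hanc : ancestor E xk xi)
  (hci : cond_indep P v [set xk] [set xj] [set xi]) :
  (~ exists q, backdoor_path E xi xj q) /\ ~ ancestor E xj xi.
Proof.
have hsep : dsep E xk xj [set xi].
  by apply: (hCFC _ _ _ _ _ _ hci); rewrite ?inE ?set1I_eq0 // eq_sym.
have no_open_path := ancestor_not_dsep hdag hanc ^~ hsep.
split=> [[q hbackdoor] | [_ /connect_rev_gpath[q hq hrev]]].
  have [hq _] := hbackdoor.
  apply/no_open_path/(collider_free_open_path hq).
  exact: (backdoor_path_collider_free hdag hbackdoor).
apply/no_open_path/(collider_free_open_path hq).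
exact: (rev_directed_path_collider_free hdag hrev).
Qed.
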